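(* Let $0\le k<m\le n-1$. Let $U$ be an $(m+1)$-block of $\Lambda_N^n$, let $U_1,U_2\subset U$ be two disjoint $m$-blocks, and let $U_1'\subset U_1$ and $U_2'\subset U_2$ be $k$-blocks. Let $\sigma\in\{-1,+1\}^{\Lambda_N^n}$, let $\varphi:U_1'\to U_2'$ be a bijection with $d(\varphi(x),\varphi(y))=d(x,y)$, and define $\sigma'$ by $\sigma'(v)=\sigma(v)$ for $v\notin U_1'\cup U_2'$, $\sigma'(v)=\sigma(\varphi(v))$ for $v\in U_1'$, $\sigma'(v)=\sigma(\varphi^{-1}(v))$ for $v\in U_2'$. For $k+1\le i\le m$ let $A_i=\{x\in U_1:\sigma(x)=-1,\ d(x,U_1')=i\}$ and $C_i=\{x\in U_2:\sigma(x)=-1,\ d(x,U_2')=i\}$. Then $$\mathcal H(\sigma')-\mathcal H(\sigma)=\sum_{i=k+1}^m2\,(J_i-J_{m+1})\,\big(|A_i|-|C_i|\big)\,\big(|U_2'\cap\sigma|-|U_1'\cap\sigma|\big),$$ where $|U_j'\cap\sigma|$ is the number of $v\in U_j'$ with $\sigma(v)=+1$.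
   Context: Hierarchical lattice $\Lambda_N^n=\{1,\dots,N^n\}$ ($N\ge2$); for $0\le k\le n$ the $k$-blocks are the sets $\{jN^k+1,\dots,(j+1)N^k\}$, $0\le j<N^{n-k}$; $d(a,b)$ is the smallest $k\ge0$ such that $a,b$ lie in a common $k$-block. For $x\notin U_1'$ with $x\in U_1$, all $v\in U_1'$ have the same distance to $x$, denoted $d(x,U_1')$ (similarly for $U_2'$). Hamiltonian with $h>0$, $J_1,\dots,J_n>0$: $\mathcal H(\sigma)=-\frac12\sum_{\{v,w\},v\ne w}J_{d(v,w)}\sigma(v)\sigma(w)-\frac h2\sum_v\sigma(v)$, the first sum over unordered pairs of distinct vertices. *)

From HB Require Import structures.
From mathcomp Require Import all_boot all_order all_algebra.
Set Implicit Arguments. Unset Strict Implicit. Unset Printing Implicit Defensive.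
Import Order.TTheory GRing.Theory Num.Theory.

(* Vertices of Lambda_N^n = {1,...,N^n} are encoded 0-based as 'I_(N^n):
   the ordinal v stands for the vertex v+1.  The k-block
   {jN^k+1, ..., (j+1)N^k} then becomes {v | v %/ N^k = j}. *)

(* d(a,b): smallest k >= 0 with a, b in a common k-block
   (for a, b < N^n, k = n always works, so searching 0..n suffices). *)
Definition dist (N n : nat) (a b : nat) : nat :=
  find (fun k => a %/ N ^ k == b %/ N ^ k) (iota 0 n.+1).

Definition block (N n k j : nat) : {set 'I_(N ^ n)} :=
  [set v : 'I_(N ^ n) | v %/ N ^ k == j].

Definition is_block (N n k : nat) (B : {set 'I_(N ^ n)}) : Prop :=
  (k <= n)%N /\ exists2 j, (j < N ^ (n - k))%N & B = block N n k j.

Arguments is_block : clear implicits.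
Local Open Scope ring_scope.

Definition ham (R : realFieldType) (N n : nat) (J : nat -> R) (h : R)
  (s : 'I_(N ^ n) -> R) : R :=
  - (1 / 2) * (\sum_(v : 'I_(N ^ n)) \sum_(w : 'I_(N ^ n) | (val v < val w)%N)
                  J (dist N n v w) * s v * s w)
  - h / 2 * (\sum_(v : 'I_(N ^ n)) s v).

(* A_i (resp. C_i): x in U1 with sigma(x) = -1 and d(x, U1') = i.
   Used only for i > k, where x in U1' is automatically excluded and for
   x outside U1' all v in U1' are at the same distance from x. *)
Definition minus_at_dist (R : realFieldType) (N n : nat) (s : 'I_(N ^ n) -> R)
  (U1 U1' : {set 'I_(N ^ n)}) (i : nat) : {set 'I_(N ^ n)} :=
  [set x in U1 | (s x == -1) && [forall v in U1', dist N n x v == i]].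

Definition plus_count (R : realFieldType) (N n : nat) (s : 'I_(N ^ n) -> R)
  (U' : {set 'I_(N ^ n)}) : nat :=
  #|[set v in U' | s v == 1]|.

From HB Require Import structures.
From mathcomp Require Import all_boot all_order all_algebra.
From mathcomp Require Import zify ring lra.
Set Implicit Arguments. Unset Strict Implicit. Unset Printing Implicit Defensive.
Import Order.TTheory GRing.Theory Num.Theory.

(* Let pi be the involution exchanging U1' and U2' through phi and psi, so that
   sigma' = sigma \o pi and the change of energy is
   -1/4 sum_(v,w) (J(d(pi v, pi w)) - J(d(v, w))) sigma(v) sigma(w).
   Blocks are the balls of the ultrametric d, and a point outside a ball is equidistant
   from all its points.  Hence the coupling change vanishes unless exactly one of v, w
   lies in U1' \cup U2', and it factors as shift(v) side(w) + shift(w) side(v), where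
   side is 1 on U1', -1 on U2', 0 elsewhere, and shift(v) = J(d(v,U2')) - J(d(v,U1')) off
   U1' \cup U2'.  The double sum is thus 2 (sum shift sigma) (sum side sigma).  The second
   factor is 2 (|U1' cap sigma| - |U2' cap sigma|); shift lives on U1 \cup U2, where it is
   -(J_i - J_(m+1)) on the sphere of radius i around U1' and +(J_i - J_(m+1)) on the one
   around U2', and spheres of equal radius have equal size, which leaves
   2 sum_i (J_i - J_(m+1)) (|A_i| - |C_i|) for the first factor. *)

Lemma card_ord_count (M : nat) (P : pred nat) :
  #|[set v : 'I_M | P v]| = count P (iota 0 M).
Proof. by rewrite cardsE cardE size_filter -val_enum_ord count_map enumT. Qed.

Lemma card_divn_eq (M D q : nat) : 0 < D -> q.+1 * D <= M ->
  #|[set v : 'I_M | v %/ D == q]| = D.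
Proof.
move=> D_gt0 qDM.
have divE v : (v %/ D == q) = (q * D <= v < q * D + D).
  by rewrite eqn_leq -ltnS ltn_divLR // leq_divRL // mulSn addnC andbC.
rewrite (card_ord_count M (fun v => v %/ D == q)) -(subnKC qDM) mulSn [D + _]addnC.
rewrite !iotaD !count_cat add0n.
rewrite (eq_in_count (a2 := pred0)) ?count_pred0; last first.
  by move=> v; rewrite mem_iota divE /=; lia.
rewrite (eq_in_count (a2 := predT)) ?count_predT ?size_iota; last first.
  by move=> v; rewrite mem_iota divE /=; lia.
rewrite (eq_in_count (a2 := pred0)) ?count_pred0 ?addn0 //.
by move=> v; rewrite mem_iota divE /=; lia.
Qed.

Lemma divn_expn_eq_mono (N a b i j : nat) : i <= j ->
  a %/ N ^ i = b %/ N ^ i -> a %/ N ^ j = b %/ N ^ j.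
Proof. by move=> le_ij e; rewrite -(subnKC le_ij) expnD !divnMA e. Qed.

Section HierarchicalDistance.

Variables N n : nat.
Implicit Types a b c v w x y z : 'I_(N ^ n).

Lemma dist_sym a b : dist N n a b = dist N n b a.
Proof. by apply: eq_find => i; rewrite eq_sym. Qed.

Lemma dist_refl a : dist N n a a = 0.
Proof. by rewrite /dist /= eqxx. Qed.

Lemma dist_leq_divn a b l : (dist N n a b <= l) = (a %/ N ^ l == b %/ N ^ l).
Proof.
pose P l := a %/ N ^ l == b %/ N ^ l.
have P_n : P n by rewrite /P !divn_small.
have has_P : has P (iota 0 n.+1) by apply/hasP; exists n; rewrite ?mem_iota ?ltnSn.
have -> : dist N n a b = find P (iota 0 n.+1) by [].
have find_lt : find P (iota 0 n.+1) < n.+1 by rewrite -[X in _ < X](size_iota 0) -has_find.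
apply/idP/idP => [le_dl | P_l].
  have := nth_find 0 has_P; rewrite nth_iota // add0n => /eqP.
  by move/(divn_expn_eq_mono le_dl)/eqP.
rewrite leqNgt; apply/negP => lt_ld.
have := before_find 0 lt_ld; rewrite nth_iota ?add0n; last exact: ltn_trans lt_ld find_lt.
by rewrite /P P_l.
Qed.

Lemma dist_ultra x y z : dist N n x z <= maxn (dist N n x y) (dist N n y z).
Proof.
set l := maxn _ _; rewrite dist_leq_divn.
have /eqP -> : x %/ N ^ l == y %/ N ^ l by rewrite -dist_leq_divn leq_maxl.
by rewrite -dist_leq_divn leq_maxr.
Qed.

Definition ball c (l : nat) : {set 'I_(N ^ n)} := [set v : 'I_(N ^ n) | dist N n v c <= l].
Definition sphere c (l : nat) : {set 'I_(N ^ n)} := [set v : 'I_(N ^ n) | dist N n v c == l].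

Lemma center_in_ball c l : c \in ball c l.
Proof. by rewrite inE dist_refl. Qed.

Lemma ball_mono c l l' : l <= l' -> ball c l \subset ball c l'.
Proof. by move=> le_ll'; apply/subsetP => v; rewrite !inE => /leq_trans; apply. Qed.

Lemma dist_out_ball c l v w : v \in ball c l -> w \notin ball c l ->
  dist N n w v = dist N n w c.
Proof.
rewrite !inE -ltnNge => vc cw.
have := dist_ultra w v c; have := dist_ultra w c v; rewrite (dist_sym c v); lia.
Qed.

Lemma is_block_ball l B c : is_block N n l B -> c \in B -> B = ball c l.
Proof.
move=> [_ [j _ ->]]; rewrite inE => /eqP cj.
by apply/setP => v; rewrite !inE dist_leq_divn cj.
Qed.

Lemma is_block_n0 l B : 0 < N -> is_block N n l B -> exists c, c \in B.
Proof.
move=> N_gt0 [le_ln [j lt_j ->]].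
have lt_jN : j * N ^ l < N ^ n.
  by rewrite -[in N ^ n](subnK le_ln) expnD ltn_pmul2r // expn_gt0 N_gt0.
by exists (Ordinal lt_jN); rewrite inE /= mulnK // expn_gt0 N_gt0.
Qed.

Lemma card_ball c l : 0 < N -> l <= n -> #|ball c l| = N ^ l.
Proof.
move=> N_gt0 le_ln.
have -> : ball c l = [set v : 'I_(N ^ n) | v %/ N ^ l == c %/ N ^ l].
  by apply/setP => v; rewrite !inE dist_leq_divn.
apply: card_divn_eq; first by rewrite expn_gt0 N_gt0.
have lt_cl : c %/ N ^ l < N ^ (n - l).
  by rewrite ltn_divLR ?expn_gt0 ?N_gt0 // -expnD subnK.
by rewrite -[X in _ <= N ^ X](subnK le_ln) expnD leq_mul2r lt_cl orbT.
Qed.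

Lemma card_sphere c i : 0 < N -> 0 < i <= n -> #|sphere c i| = N ^ i - N ^ i.-1.
Proof.
move=> N_gt0 /andP[i_gt0 le_in].
rewrite -(card_ball c N_gt0 le_in) -(card_ball c N_gt0 (leq_trans (leq_pred i) le_in)).
rewrite -(cardsID (ball c i.-1) (ball c i)).
have -> : ball c i :&: ball c i.-1 = ball c i.-1 by apply/setP => v; rewrite !inE; lia.
have -> : ball c i :\: ball c i.-1 = sphere c i by apply/setP => v; rewrite !inE; lia.
by rewrite addKn.
Qed.

End HierarchicalDistance.

Local Open Scope ring_scope.

Lemma sum_sign (R : comPzRingType) (T : finType) (A : {set T}) (s : T -> R) (c : R) :
  (forall v, s v = c \/ s v = - c) ->
  \sum_(v in A) s v = c * (#|A|%:R - 2 * #|[set v in A | s v == - c]|%:R).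
Proof.
move=> s_pm.
rewrite (big_setID [set v | s v == - c]) /= -setIdE -(cardsID [set v | s v == - c] A) -setIdE.
have -> : \sum_(v in [set v in A | s v == - c]) s v = - c *+ #|[set v in A | s v == - c]|.
  by rewrite -sumr_const; apply: eq_bigr => v; rewrite inE => /andP[_ /eqP].
have -> : \sum_(v in A :\: [set v | s v == - c]) s v = c *+ #|A :\: [set v | s v == - c]|.
  rewrite -sumr_const; apply: eq_bigr => v; rewrite !inE => /andP[/eqP s_nc _].
  by case: (s_pm v).
rewrite natrD; ring.
Qed.

Lemma sum_partition_nat (R : nmodType) (T : finType) (A : {pred T}) (g : T -> nat)
    (lo hi : nat) (F : T -> R) :
  {in A, forall v, lo <= g v < hi}%N ->
  \sum_(v in A) F v = \sum_(lo <= i < hi) \sum_(v in A | g v == i) F v.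
Proof.
move=> g_range; under [RHS]eq_bigr do rewrite big_mkcondr /=.
rewrite exchange_big /=; apply: eq_bigr => v vA.
rewrite (bigD1_seq (g v)) ?mem_index_iota ?g_range ?iota_uniq //= eqxx big1 ?addr0 //.
by move=> i; rewrite eq_sym => /negbTE ->.
Qed.

Lemma sum_pairs_sym (V : nmodType) (M : nat) (f : 'I_M -> 'I_M -> V) :
  (forall v w, f v w = f w v) ->
  \sum_v \sum_w f v w = (\sum_v \sum_(w | (val v < val w)%N) f v w) *+ 2 + \sum_v f v v.
Proof.
move=> f_sym.
have split_row v : \sum_w f v w =
    \sum_(w | (val v < val w)%N) f v w + \sum_(w | (val w < val v)%N) f v w + f v v.
  rewrite (bigD1 v) //= (bigID (fun w => (val v < val w)%N)) /= addrC.
  by congr (_ + _ + _); apply: eq_bigl => w; rewrite -(inj_eq val_inj) /=; lia.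
have lower_upper : \sum_v \sum_(w | (val w < val v)%N) f v w
                 = \sum_v \sum_(w | (val v < val w)%N) f v w.
  rewrite (exchange_big_dep xpredT) //=; apply: eq_bigr => v _.
  by apply: eq_bigr => w _; rewrite f_sym.
by rewrite (eq_bigr _ (fun v _ => split_row v)) !big_split /= lower_upper mulr2n.
Qed.

Lemma sum_rank2_form (R : comPzRingType) (T : finType) (K : T -> T -> R) (g e s : T -> R) :
  (forall v w, K v w = g v * e w + g w * e v) ->
  \sum_v \sum_w K v w * s v * s w = 2 * (\sum_v g v * s v) * (\sum_v e v * s v).
Proof.
move=> K_split.
transitivity (\sum_v \sum_w (g v * s v * (e w * s w) + g w * s w * (e v * s v))).
  by apply: eq_bigr => v _; apply: eq_bigr => w _; rewrite K_split; ring.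
under eq_bigr do rewrite big_split /=.
by rewrite big_split /= [X in _ + X]exchange_big /= -!big_distrlr /= -mulrA mulr_natl mulr2n.
Qed.

Section HamiltonianChange.

Variables (R : realFieldType) (N n : nat) (J : nat -> R) (h : R).
Local Notation V := 'I_(N ^ n).

Lemma ham_involution (s s' : V -> R) (pi : V -> V) :
  involutive pi -> s' =1 s \o pi ->
  ham J h s' - ham J h s =
  - (\sum_v \sum_w (J (dist N n (pi v) (pi w)) - J (dist N n v w)) * s v * s w) / 4.
Proof.
move=> piK s'E.
have reindex (F : V -> R) : \sum_v F (pi v) = \sum_v F v.
  by rewrite [RHS](reindex_inj (inv_inj piK)).
pose E (s0 : V -> R) := \sum_(v : V) \sum_(w : V) J (dist N n v w) * s0 v * s0 w.
have hamE (s0 : V -> R) : ham J h s0 =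
    - (E s0 - \sum_v J 0%N * s0 v * s0 v) / 4 - h / 2 * \sum_v s0 v.
  rewrite /ham /E (@sum_pairs_sym _ _ (fun v w => J (dist N n v w) * s0 v * s0 w)).
    have -> : \sum_(v : V) J (dist N n v v) * s0 v * s0 v = \sum_v J 0%N * s0 v * s0 v.
      by apply: eq_bigr => v _; rewrite dist_refl.
    by field.
  by move=> v w; rewrite dist_sym mulrAC.
have E_s' : E s' = \sum_v \sum_w J (dist N n (pi v) (pi w)) * s v * s w.
  rewrite /E -reindex; apply: eq_bigr => v _; rewrite -reindex.
  by apply: eq_bigr => w _; rewrite !s'E /= !piK.
have diag_s' : \sum_v J 0%N * s' v * s' v = \sum_v J 0%N * s v * s v.
  by rewrite -reindex; apply: eq_bigr => v _; rewrite !s'E /= piK.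
have sum_s' : \sum_v s' v = \sum_v s v.
  by rewrite -reindex; apply: eq_bigr => v _; rewrite s'E /= piK.
have -> : \sum_v \sum_w (J (dist N n (pi v) (pi w)) - J (dist N n v w)) * s v * s w
    = E s' - E s.
  rewrite E_s' /E -sumrB; apply: eq_bigr => v _.
  by rewrite -sumrB; apply: eq_bigr => w _; rewrite !mulrBl.
by rewrite !hamE diag_s' sum_s'; field.
Qed.

End HamiltonianChange.

Section Swap.

Variables (T : finType) (A B : {set T}) (phi psi : T -> T).

Definition swap (v : T) : T := if v \in A then phi v else if v \in B then psi v else v.

Hypotheses (AB_disj : [disjoint A & B])
  (phi_in : {in A, forall x, phi x \in B}) (psi_in : {in B, forall y, psi y \in A})
  (phiK : {in A, cancel phi psi}) (psiK : {in B, cancel psi phi}).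

Lemma swap_inl v : v \in A -> swap v = phi v.
Proof. by rewrite /swap => ->. Qed.

Lemma swap_inr v : v \in B -> swap v = psi v.
Proof. by move=> vB; rewrite /swap (disjointFl AB_disj vB) vB. Qed.

Lemma swap_out v : v \notin A :|: B -> swap v = v.
Proof. by rewrite /swap inE negb_or => /andP[/negbTE -> /negbTE ->]. Qed.

Lemma swapK : involutive swap.
Proof.
move=> v; case: (boolP (v \in A)) => [vA | vNA].
  by rewrite (swap_inl vA) (swap_inr (phi_in vA)) phiK.
case: (boolP (v \in B)) => [vB | vNB].
  by rewrite (swap_inr vB) (swap_inl (psi_in vB)) psiK.
by rewrite !swap_out // inE negb_or vNA.
Qed.

End Swap.

Arguments swap_inl {T A B phi psi v}.
Arguments swap_inr {T A B phi psi} AB_disj {v}.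
Arguments swap_out {T A B phi psi v}.

Section SpinSums.

Variables (R : realFieldType) (N n : nat) (s : 'I_(N ^ n) -> R).
Hypothesis s_pm : forall v, s v = 1 \/ s v = -1.

Lemma minus_at_dist_ball c k m i : (k < i <= m)%N ->
  minus_at_dist s (ball c m) (ball c k) i = [set v in sphere c i | s v == -1].
Proof.
move=> /andP[lt_ki le_im]; apply/setP => v; rewrite !inE.
apply/idP/idP => [/and3P[_ sv /forall_inP dist_i] | /andP[/eqP dvc sv]].
  by rewrite sv andbT; apply: dist_i; apply: center_in_ball.
rewrite dvc le_im sv /=; apply/forall_inP => w wc.
by rewrite (dist_out_ball wc) ?inE dvc // -ltnNge.
Qed.

Lemma sum_annulus_spin c k m (F : nat -> R) :
  \sum_(v in ball c m :\: ball c k) F (dist N n v c) * s v =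
  \sum_(k.+1 <= i < m.+1)
    F i * (#|sphere c i|%:R - 2 * #|minus_at_dist s (ball c m) (ball c k) i|%:R).
Proof.
rewrite (sum_partition_nat (g := fun v : 'I_(N ^ n) => dist N n v c)
                           (lo := k.+1) (hi := m.+1)).
  2: by move=> v; rewrite !inE; lia.
apply: eq_big_nat => i /andP[lt_ki lt_im].
rewrite minus_at_dist_ball ?lt_ki // -[X in F i * X]mul1r.
rewrite -(@sum_sign _ _ _ s 1); last exact: s_pm.
rewrite mulr_sumr; apply: eq_big => v; rewrite !inE.
  by apply/andP/eqP => [[/andP[_ _] /eqP] | ->] //; split; rewrite ?eqxx //; lia.
by move=> /andP[_ /eqP ->].
Qed.

End SpinSums.

Section SwapOfSubblocks.

Variables (R : realFieldType) (N n k m : nat) (J : nat -> R) (h : R).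
Local Notation V := 'I_(N ^ n).
Variables (a b : V) (sigma sigma' : V -> R) (phi psi : V -> V).
Local Notation A := (ball a k).
Local Notation B := (ball b k).

Hypotheses (N_gt0 : (0 < N)%N) (k_lt_m : (k < m)%N) (m_lt_n : (m < n)%N).
Hypothesis dist_ab : dist N n a b = m.+1.
Hypothesis sigma_pm : forall v, sigma v = 1 \/ sigma v = -1.
Hypotheses (phi_in : {in A, forall x, phi x \in B}) (psi_in : {in B, forall y, psi y \in A})
  (phiK : {in A, cancel phi psi}) (psiK : {in B, cancel psi phi})
  (phi_iso : {in A &, forall x y, dist N n (phi x) (phi y) = dist N n x y}).
Hypotheses (sigma'_out : forall v, v \notin A :|: B -> sigma' v = sigma v)
  (sigma'_A : {in A, forall v, sigma' v = sigma (phi v)})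
  (sigma'_B : {in B, forall v, sigma' v = sigma (psi v)}).

Lemma dist_cross x y : x \in ball a m -> y \in ball b m -> dist N n x y = m.+1.
Proof.
move=> xa yb.
have b_out : b \notin ball a m by rewrite inE dist_sym dist_ab ltnn.
have x_out : x \notin ball b m.
  by rewrite inE dist_sym (dist_out_ball xa b_out) dist_sym dist_ab ltnn.
by rewrite (dist_out_ball yb x_out) dist_sym (dist_out_ball xa b_out) dist_sym.
Qed.

Lemma dist_far_eq v : v \notin ball a m -> v \notin ball b m ->
  dist N n v a = dist N n v b.
Proof.
rewrite !inE -!ltnNge => va vb.
have := dist_ultra v a b; have := dist_ultra v b a; rewrite (dist_sym b a) dist_ab; lia.
Qed.

Lemma disjoint_balls : [disjoint ball a m & ball b m].
Proof.
apply/pred0P => v /=; apply/negP => /andP[va vb].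
by have := dist_cross va vb; rewrite dist_refl.
Qed.

Let A_sub : A \subset ball a m := ball_mono a (ltnW k_lt_m).
Let B_sub : B \subset ball b m := ball_mono b (ltnW k_lt_m).
Let sub_A := subsetP A_sub.
Let sub_B := subsetP B_sub.

Lemma disjoint_AB : [disjoint A & B].
Proof. exact: disjointW A_sub B_sub disjoint_balls. Qed.

Local Notation pi := (swap A B phi psi).

Lemma sigma'_swap : sigma' =1 sigma \o pi.
Proof.
move=> v /=; case: (boolP (v \in A)) => [vA | vNA].
  by rewrite swap_inl ?sigma'_A.
case: (boolP (v \in B)) => [vB | vNB].
  by rewrite swap_inr ?sigma'_B //; apply: disjoint_AB.
by rewrite swap_out ?sigma'_out // inE negb_or vNA.
Qed.

Lemma psi_iso : {in B &, forall x y, dist N n (psi x) (psi y) = dist N n x y}.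
Proof. by move=> x y xB yB; rewrite -[in RHS](psiK xB) -[in RHS](psiK yB) phi_iso ?psi_in. Qed.

Lemma swap_dist_in v w : v \in A :|: B -> w \in A :|: B ->
  dist N n (pi v) (pi w) = dist N n v w.
Proof.
have AB := disjoint_AB.
rewrite !in_setU => /orP[vA | vB] /orP[wA | wB].
- by rewrite !swap_inl ?phi_iso.
- rewrite (swap_inl vA) (swap_inr AB wB) (dist_sym (phi v)).
  by rewrite !dist_cross ?sub_A ?sub_B ?phi_in ?psi_in.
- rewrite (swap_inr AB vB) (swap_inl wA) (dist_sym v).
  by rewrite !dist_cross ?sub_A ?sub_B ?phi_in ?psi_in.
- by rewrite !(swap_inr AB) ?psi_iso.
Qed.

Let side (v : V) : R := (v \in A)%:R - (v \in B)%:R.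
Let shift (v : V) : R := if v \in A :|: B then 0 else J (dist N n v b) - J (dist N n v a).

Lemma swap_dist_out v w : v \in A :|: B -> w \notin A :|: B ->
  J (dist N n (pi v) w) - J (dist N n v w) = side v * shift w.
Proof.
move=> vAB wAB; rewrite /shift (negbTE wAB).
move: wAB; rewrite in_setU negb_or => /andP[wNA wNB].
have AB := disjoint_AB.
move: vAB; rewrite in_setU => /orP[vA | vB].
  rewrite /side vA (disjointFr AB vA) (swap_inl vA) (dist_sym _ w) (dist_sym v w).
  by rewrite (dist_out_ball (phi_in vA) wNB) (dist_out_ball vA wNA) /=; ring.
rewrite /side vB (disjointFl AB vB) (swap_inr AB vB) (dist_sym _ w) (dist_sym v w).
by rewrite (dist_out_ball (psi_in vB) wNA) (dist_out_ball vB wNB) /=; ring.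
Qed.

Lemma swap_coupling_split v w :
  J (dist N n (pi v) (pi w)) - J (dist N n v w) = shift v * side w + shift w * side v.
Proof.
have side_out u : u \notin A :|: B -> side u = 0.
  by rewrite in_setU negb_or /side => /andP[/negbTE -> /negbTE ->]; rewrite subrr.
have shift_in u : u \in A :|: B -> shift u = 0 by rewrite /shift => ->.
case: (boolP (v \in A :|: B)) => vAB; case: (boolP (w \in A :|: B)) => wAB.
- by rewrite swap_dist_in // subrr !shift_in // !mul0r addr0.
- by rewrite (swap_out wAB) swap_dist_out // (shift_in v) // mul0r add0r mulrC.
- rewrite (swap_out vAB) (dist_sym v (pi w)) (dist_sym v w) swap_dist_out //.
  by rewrite (shift_in w) // mul0r addr0 mulrC.
- by rewrite !swap_out // subrr !side_out // !mulr0 addr0.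
Qed.

Lemma sum_side_spin :
  \sum_v side v * sigma v = 2 * ((plus_count sigma A)%:R - (plus_count sigma B)%:R).
Proof.
have sum_in (C : {set V}) : \sum_(v in C) sigma v = 2 * (plus_count sigma C)%:R - #|C|%:R.
  rewrite (@sum_sign _ _ _ _ (-1)) /plus_count ?opprK; first by ring.
  by move=> v; case: (sigma_pm v); auto.
have -> : \sum_v side v * sigma v = \sum_(v in A) sigma v - \sum_(v in B) sigma v.
  rewrite [X in X - _]big_mkcond [X in _ - X]big_mkcond -sumrB /=.
  by apply: eq_bigr => v _; rewrite /side; case: (v \in A); case: (v \in B) => /=; ring.
have k_le_n : (k <= n)%N by lia.
by rewrite !sum_in !card_ball //; ring.
Qed.

Lemma shift_annuli v :
  shift v = (if v \in ball b m :\: B then J (dist N n v b) - J m.+1 else 0)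
      - (if v \in ball a m :\: A then J (dist N n v a) - J m.+1 else 0).
Proof.
rewrite /shift !in_setD in_setU.
case: (boolP (v \in A)) => [vA | vNA] /=.
  by rewrite (disjointFr disjoint_balls (sub_A vA)) andbF subrr.
case: (boolP (v \in B)) => [vB | vNB] /=.
  by rewrite (disjointFl disjoint_balls (sub_B vB)) subrr.
case: (boolP (v \in ball a m)) => [va | vNa].
  rewrite (disjointFr disjoint_balls va) (dist_cross va (center_in_ball b m)); ring.
case: (boolP (v \in ball b m)) => [vb | vNb].
  by rewrite (dist_sym v a) (dist_cross (center_in_ball a m) vb) subr0.
by rewrite dist_far_eq // !subrr.
Qed.

Lemma sum_shift_spin :
  \sum_v shift v * sigma v =
  2 * \sum_(k.+1 <= i < m.+1) (J i - J m.+1) *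
        (#|minus_at_dist sigma (ball a m) A i|%:R - #|minus_at_dist sigma (ball b m) B i|%:R).
Proof.
have -> : \sum_v shift v * sigma v =
    \sum_(v in ball b m :\: B) (J (dist N n v b) - J m.+1) * sigma v
  - \sum_(v in ball a m :\: A) (J (dist N n v a) - J m.+1) * sigma v.
  rewrite [X in X - _]big_mkcond [X in _ - X]big_mkcond -sumrB /=.
  apply: eq_bigr => v _; rewrite shift_annuli mulrBl.
  by case: (v \in ball b m :\: B); case: (v \in ball a m :\: A); rewrite ?mul0r.
rewrite (sum_annulus_spin sigma_pm b k m (fun i => J i - J m.+1)).
rewrite (sum_annulus_spin sigma_pm a k m (fun i => J i - J m.+1)) -sumrB mulr_sumr.
apply: eq_big_nat => i /andP[lt_ki lt_im].
by rewrite !card_sphere //; [ring | lia..].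
Qed.

Theorem ham_swap_subblocks :
  ham J h sigma' - ham J h sigma =
  \sum_(k.+1 <= i < m.+1)
     2 * (J i - J m.+1)
       * (#|minus_at_dist sigma (ball a m) A i|%:R - #|minus_at_dist sigma (ball b m) B i|%:R)
       * ((plus_count sigma B)%:R - (plus_count sigma A)%:R).
Proof.
rewrite (ham_involution J h (swapK disjoint_AB phi_in psi_in phiK psiK) sigma'_swap).
rewrite (sum_rank2_form sigma swap_coupling_split) sum_shift_spin sum_side_spin.
rewrite -mulr_suml; under [in RHS]eq_bigr do rewrite -mulrA.
by rewrite -mulr_sumr; field.
Qed.

End SwapOfSubblocks.

Theorem lemma2p1 (R : realFieldType) (N n k m : nat) (J : nat -> R) (h : R)
  (U U1 U2 U1' U2' : {set 'I_(N ^ n)})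
  (sigma sigma' : 'I_(N ^ n) -> R) (phi psi : 'I_(N ^ n) -> 'I_(N ^ n)) :
  (2 <= N)%N ->
  0 < h ->
  (forall i, (1 <= i <= n)%N -> 0 < J i) ->
  (k < m)%N -> (m <= n - 1)%N ->
  is_block N n m.+1 U ->
  is_block N n m U1 -> is_block N n m U2 ->
  U1 \subset U -> U2 \subset U -> [disjoint U1 & U2] ->
  is_block N n k U1' -> is_block N n k U2' ->
  U1' \subset U1 -> U2' \subset U2 ->
  (forall v, sigma v = 1 \/ sigma v = -1) ->
  (* phi : U1' -> U2' is a bijection with inverse psi : U2' -> U1' *)
  {in U1', forall x, phi x \in U2'} ->
  {in U2', forall y, psi y \in U1'} ->
  {in U1', cancel phi psi} ->
  {in U2', cancel psi phi} ->
  (* phi preserves the hierarchical distance *)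
  {in U1' &, forall x y, dist N n (phi x) (phi y) = dist N n x y} ->
  (* definition of sigma' *)
  (forall v, v \notin U1' :|: U2' -> sigma' v = sigma v) ->
  {in U1', forall v, sigma' v = sigma (phi v)} ->
  {in U2', forall v, sigma' v = sigma (psi v)} ->
  ham J h sigma' - ham J h sigma =
  \sum_(k.+1 <= i < m.+1)
     2 * (J i - J m.+1)
       * ((#|minus_at_dist sigma U1 U1' i|)%:R - (#|minus_at_dist sigma U2 U2' i|)%:R)
       * ((plus_count sigma U2')%:R - (plus_count sigma U1')%:R).
Proof.
move=> N_ge2 _ _ k_lt_m m_le_n U_blk U1_blk U2_blk sU1 sU2 dU12 U1'_blk U2'_blk sU1' sU2'
  sigma_pm phi_in psi_in phiK psiK phi_iso sigma'_out sigma'_U1' sigma'_U2'.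
have N_gt0 : (0 < N)%N := ltnW N_ge2.
have m_lt_n : (m < n)%N by lia.
have [a a_U1'] := is_block_n0 N_gt0 U1'_blk.
have [b b_U2'] := is_block_n0 N_gt0 U2'_blk.
have a_U1 := subsetP sU1' a a_U1'; have b_U2 := subsetP sU2' b b_U2'.
have dist_ab : dist N n a b = m.+1.
  have : b \in ball a m.+1 by rewrite -(is_block_ball U_blk (subsetP sU1 a a_U1)) (subsetP sU2).
  have : b \notin ball a m by rewrite -(is_block_ball U1_blk a_U1) (disjointFl dU12 b_U2).
  by rewrite !inE dist_sym; lia.
move: (is_block_ball U1_blk a_U1) (is_block_ball U2_blk b_U2) => eU1 eU2.
move: (is_block_ball U1'_blk a_U1') (is_block_ball U2'_blk b_U2') => eU1' eU2'.
subst U1 U2 U1' U2'.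
exact: (ham_swap_subblocks J h N_gt0 k_lt_m m_lt_n dist_ab sigma_pm
          phi_in psi_in phiK psiK phi_iso sigma'_out sigma'_U1' sigma'_U2').
Qed.
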